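(* Assume that $(R,\mathfrak m)$ is $F$-pure and let $\mathfrak a$ be an ideal of $R$. Then $(0:_E\mathfrak a)\subseteq(\operatorname{ann}_{\Phi(E)}(\mathfrak aR[x,f]))_0$ if and only if $\mathfrak a$ is $\Phi(E)$-special and $(\operatorname{ann}_{\Phi(E)}(\mathfrak aR[x,f]))_0=(0:_E\mathfrak a)$.
   Context: $(R,\mathfrak m)$ is a commutative Noetherian local ring of prime characteristic $p$. $R$ is $F$-pure if for every $R$-module $M$ the map $M\to R^{(1)}\otimes_RM$, $m\mapsto1\otimes m$, is injective ($R^{(1)}$ = $R$ with right structure via $r\mapsto r^p$). The Frobenius skew polynomial ring $R[x,f]$ consists of polynomials $\sum r_ix^i$, free left $R$-module on $(x^i)_{i\ge0}$, with $xr=r^px$; graded with $n$th component $Rx^n$. $E=E_R(R/\mathfrak m)$; $\Phi(E)=R[x,f]\otimes_RE=\bigoplus_nRx^n\otimes_RE$, with $0$th component $R\otimes_RE$ identified with $E$. An ideal is $\Phi(E)$-special if it equals $(0:_RN)$ for some $R[x,f]$-submodule $N$ of $\Phi(E)$. $\operatorname{ann}_{\Phi(E)}(\mathfrak aR[x,f])$ is the $R[x,f]$-submodule of $\Phi(E)$ consisting of elements annihilated by all $rx^n$ with $r\in\mathfrak a$, $n\ge0$, and $(\cdot)_0$ denotes its $0$th component, a submodule of $E$. *)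

From HB Require Import structures.
From mathcomp Require Import all_boot all_order all_algebra.
Set Implicit Arguments. Unset Strict Implicit. Unset Printing Implicit Defensive.
Import GRing.Theory.
Local Open Scope ring_scope.

Definition is_ideal (R : comNzRingType) (I : R -> Prop) : Prop :=
  I 0 /\ (forall x y, I x -> I y -> I (x + y)) /\ (forall r x, I x -> I (r * x)).

Definition fg_ideal (R : comNzRingType) (I : R -> Prop) : Prop :=
  exists s : seq R, forall x,
    I x <-> exists c : nat -> R, x = \sum_(i < size s) c i * s`_i.

Definition noetherian (R : comNzRingType) : Prop :=
  forall I : R -> Prop, is_ideal I -> fg_ideal I.

Definition local_with (R : comNzRingType) (m : R -> Prop) : Prop :=
  is_ideal m /\ ~ m 1 /\ (forall x, ~ m x -> exists y, x * y = 1).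

Definition R_linear (R : comNzRingType) (M N : lmodType R) (f : M -> N) : Prop :=
  forall r x y, f (r *: x + y) = r *: f x + f y.

Definition frob_semilinear (R : comNzRingType) (p n : nat) (M N : lmodType R)
  (f : M -> N) : Prop :=
  (forall x y, f (x + y) = f x + f y) /\
  (forall r x, f (r *: x) = (r ^+ (p ^ n)) *: f x).

(* (T, tau) is the module R x^n (x)_R M, with tau m = x^n (x) m, characterised by
   its universal property (extension of scalars along F^n : R -> R). *)
Definition frob_base_change (R : comNzRingType) (p n : nat) (M T : lmodType R)
  (tau : M -> T) : Prop :=
  frob_semilinear p n tau /\
  forall (N : lmodType R) (phi : M -> N), frob_semilinear p n phi ->
    (exists psi : T -> N, R_linear psi /\ forall x, psi (tau x) = phi x) /\
    (forall psi1 psi2 : T -> N, R_linear psi1 -> R_linear psi2 ->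
       (forall x, psi1 (tau x) = psi2 (tau x)) -> forall t, psi1 t = psi2 t).

(* F-purity: for every R-module M, M -> R^(1) (x)_R M, m |-> 1 (x) m is injective. *)
Definition Fpure (R : comNzRingType) (p : nat) : Prop :=
  forall (M T : lmodType R) (tau : M -> T), frob_base_change p 1 tau -> injective tau.

Definition injective_module (R : comNzRingType) (E : lmodType R) : Prop :=
  forall (A B : lmodType R) (f : A -> B) (g : A -> E),
    R_linear f -> injective f -> R_linear g ->
    exists h : B -> E, R_linear h /\ forall x, h (f x) = g x.

(* E is an injective hull of R/m: E injective, containing e0 with R e0 ~ R/m,
   and R e0 essential in E. *)
Definition injective_hull (R : comNzRingType) (m : R -> Prop) (E : lmodType R) : Prop :=
  injective_module E /\
  exists e0 : E, (forall r, r *: e0 = 0 <-> m r) /\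
    (forall e : E, e != 0 -> exists r, r *: e != 0 /\ exists s, r *: e = s *: e0).

(* Data of Phi(E) = (+)_n R x^n (x)_R E: T n = R x^n (x)_R E, tau n e = x^n (x) e,
   xmap n : T n -> T n.+1 is the action of x. *)
Definition Phi_data (R : comNzRingType) (p : nat) (E : lmodType R)
  (T : nat -> lmodType R) (tau : forall n, E -> T n)
  (xmap : forall n, T n -> T n.+1) : Prop :=
  (forall n, frob_base_change p n (tau n)) /\
  (forall n t1 t2, xmap n (t1 + t2) = xmap n t1 + xmap n t2) /\
  (forall n r t, xmap n (r *: t) = (r ^+ p) *: xmap n t) /\
  (forall n e, xmap n (tau n e) = tau n.+1 e).

(* elements of the product; Phi(E) is the finitely supported ones *)
Definition phi_t (R : comNzRingType) (T : nat -> lmodType R) := forall n, T n.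

Definition finsupp (R : comNzRingType) (T : nat -> lmodType R) (z : phi_t T) : Prop :=
  exists N, forall n, (N <= n)%N -> z n = 0.

Definition phi0 (R : comNzRingType) (T : nat -> lmodType R) : phi_t T := fun n => 0.
Definition phi_add (R : comNzRingType) (T : nat -> lmodType R) (z w : phi_t T) : phi_t T :=
  fun n => z n + w n.
Definition phi_scale (R : comNzRingType) (T : nat -> lmodType R) (r : R) (z : phi_t T)
  : phi_t T := fun n => r *: z n.
Definition phi_x (R : comNzRingType) (T : nat -> lmodType R)
  (xmap : forall n, T n -> T n.+1) (z : phi_t T) : phi_t T :=
  fun n => match n return T n with 0 => 0 | k.+1 => xmap k (z k) end.
Definition phi_deg0 (R : comNzRingType) (T : nat -> lmodType R) (t : T 0) : phi_t T :=
  fun n => match n return T n with 0 => t | _ => 0 end.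

Definition RXf_submodule (R : comNzRingType) (T : nat -> lmodType R)
  (xmap : forall n, T n -> T n.+1) (N : phi_t T -> Prop) : Prop :=
  (forall z, N z -> finsupp z) /\ N (phi0 T) /\
  (forall z w, N z -> N w -> N (phi_add z w)) /\
  (forall r z, N z -> N (phi_scale r z)) /\
  (forall z, N z -> N (phi_x xmap z)).

Definition annR (R : comNzRingType) (T : nat -> lmodType R) (N : phi_t T -> Prop)
  (r : R) : Prop := forall z, N z -> phi_scale r z = phi0 T.

Definition PhiE_special (R : comNzRingType) (T : nat -> lmodType R)
  (xmap : forall n, T n -> T n.+1) (a : R -> Prop) : Prop :=
  exists N, RXf_submodule xmap N /\ forall r, a r <-> annR N r.

Definition annPhi (R : comNzRingType) (T : nat -> lmodType R)
  (xmap : forall n, T n -> T n.+1) (a : R -> Prop) (z : phi_t T) : Prop :=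
  finsupp z /\
  forall r n, a r -> phi_scale r (iter n (phi_x xmap) z) = phi0 T.

(* its 0th component, as a subset of E (via E = R (x)_R E, e |-> 1 (x) e) *)
Definition annPhi0 (R : comNzRingType) (E : lmodType R) (T : nat -> lmodType R)
  (tau : forall n, E -> T n) (xmap : forall n, T n -> T n.+1) (a : R -> Prop)
  (e : E) : Prop :=
  annPhi xmap a (@phi_deg0 R T (tau 0%N e)).

Definition colonE (R : comNzRingType) (E : lmodType R) (a : R -> Prop) (e : E) : Prop :=
  forall r, a r -> r *: e = 0.

(* The inclusion (ann_{Phi(E)}(a R[x,f]))_0 ⊆ (0 :_E a) always holds, since
   e |-> 1 ⊗ e is injective and r x^0 kills the degree-0 component.  Given the reverse inclusion,
   N = ann_{Phi(E)}(a R[x,f]) exhibits a as Phi(E)-special: a ⊆ (0 : N) by definition,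
   and an r ∈ (0 : N) kills (0 :_E a) ⊆ N_0, hence lies in a.  This last step is the
   part of Matlis duality that is needed: for r ∉ a there is e ∈ E with a e = 0 and
   r e ≠ 0, obtained by extending a + R r -> E, x + s r |-> s e0, to R along the
   injective module E; the map is well defined because (a : r) ⊆ m. *)
From HB Require Import structures.
From mathcomp Require Import all_boot all_order all_algebra.
From mathcomp Require Import boolp ring.
Set Implicit Arguments. Unset Strict Implicit. Unset Printing Implicit Defensive.
Import GRing.Theory.
Local Open Scope ring_scope.

Lemma R_linear0 (R : comNzRingType) (M N : lmodType R) (h : M -> N) :
  R_linear h -> h 0 = 0.
Proof.
move=> hl; have := hl 1 0 0; rewrite !scale1r addr0 => e.
by apply: (addrI (h 0)); rewrite -e addr0.
Qed.

Lemma R_linearZ (R : comNzRingType) (M N : lmodType R) (h : M -> N) c v :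
  R_linear h -> h (c *: v) = c *: h v.
Proof. by move=> hl; have := hl c v 0; rewrite (R_linear0 hl) !addr0. Qed.

Section IdealLmod.
Variables (R : comNzRingType) (P : R -> Prop).
Hypotheses (P0 : P 0) (PD : forall x y, P x -> P y -> P (x + y))
  (PZ : forall c x, P x -> P (c * x)).

(* The closure proofs are parameters of the type so that the instances can use them. *)
Definition ideal_lmod of P 0 & (forall x y, P x -> P y -> P (x + y))
  & (forall c x, P x -> P (c * x)) := {x : R | P x}.
Local Notation I := (ideal_lmod P0 PD PZ).
HB.instance Definition _ := gen_eqMixin I.
HB.instance Definition _ := gen_choiceMixin I.

Lemma idealN x : P x -> P (- x).
Proof. by move=> h; rewrite -mulN1r; apply: PZ. Qed.

Definition ideal_zero : I := exist _ 0 P0.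
Definition ideal_add (u v : I) : I := exist _ (sval u + sval v) (PD (svalP u) (svalP v)).
Definition ideal_opp (u : I) : I := exist _ (- sval u) (idealN (svalP u)).
Definition ideal_scale (c : R) (u : I) : I := exist _ (c * sval u) (PZ c (svalP u)).

Lemma ideal_sval_inj (u v : I) : sval u = sval v -> u = v.
Proof. by case: u => x hx; case: v => y hy /=; apply: eq_exist. Qed.

Lemma ideal_addA : associative ideal_add.
Proof. by move=> u v w; apply: ideal_sval_inj; rewrite /= addrA. Qed.
Lemma ideal_addC : commutative ideal_add.
Proof. by move=> u v; apply: ideal_sval_inj; rewrite /= addrC. Qed.
Lemma ideal_add0 : left_id ideal_zero ideal_add.
Proof. by move=> u; apply: ideal_sval_inj; rewrite /= add0r. Qed.
Lemma ideal_addN : left_inverse ideal_zero ideal_opp ideal_add.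
Proof. by move=> u; apply: ideal_sval_inj; rewrite /= addNr. Qed.

HB.instance Definition _ :=
  GRing.isZmodule.Build I ideal_addA ideal_addC ideal_add0 ideal_addN.

Lemma ideal_scaleA a b v : ideal_scale a (ideal_scale b v) = ideal_scale (a * b) v.
Proof. by apply: ideal_sval_inj; rewrite /= mulrA. Qed.
Lemma ideal_scale1 : left_id 1 ideal_scale.
Proof. by move=> u; apply: ideal_sval_inj; rewrite /= mul1r. Qed.
Lemma ideal_scaleDr : right_distributive ideal_scale +%R.
Proof. by move=> c u v; apply: ideal_sval_inj; rewrite /= mulrDr. Qed.
Lemma ideal_scaleDl v : {morph ideal_scale^~ v : a b / a + b}.
Proof. by move=> a b; apply: ideal_sval_inj; rewrite /= mulrDl. Qed.

HB.instance Definition _ := GRing.Zmodule_isLmodule.Build R I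
  ideal_scaleA ideal_scale1 ideal_scaleDr ideal_scaleDl.

Definition ideal_incl (u : I) : R^o := sval u.

Lemma ideal_incl_linear : R_linear ideal_incl.
Proof. by []. Qed.

Lemma ideal_incl_inj : injective ideal_incl.
Proof. exact: ideal_sval_inj. Qed.

End IdealLmod.

Section ColonWitness.
Variables (R : comNzRingType) (m a : R -> Prop) (r : R).
Hypotheses (hloc : local_with m) (ha : is_ideal a) (har : ~ a r).

Lemma colon_sub_max s : a (s * r) -> m s.
Proof.
move=> hsr; apply: contrapT => nms.
have [u hu] := hloc.2.2 s nms.
apply: har; have -> : r = u * (s * r) by rewrite mulrA (mulrC u) hu mul1r.
exact: ha.2.2.
Qed.

Definition adjoin (y : R) : Prop := exists x s, a x /\ y = x + s * r.

Lemma adjoin0 : adjoin 0.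
Proof. by exists 0, 0; split; [exact: ha.1 | rewrite mul0r addr0]. Qed.

Lemma adjoinD y z : adjoin y -> adjoin z -> adjoin (y + z).
Proof.
move=> [x [s [hx ->]]] [x' [s' [hx' ->]]]; exists (x + x'), (s + s').
by split; [exact: ha.2.1 | rewrite mulrDl addrACA].
Qed.

Lemma adjoinZ c y : adjoin y -> adjoin (c * y).
Proof.
move=> [x [s [hx ->]]]; exists (c * x), (c * s).
by split; [exact: ha.2.2 | rewrite mulrDr mulrA].
Qed.

Local Notation A := (ideal_lmod adjoin0 adjoinD adjoinZ).

Variables (E : lmodType R) (e0 : E).
Hypothesis he0 : forall s, s *: e0 = 0 <-> m s.

Lemma adjoin_coef_scale x x' s s' : a x -> a x' ->
  x + s * r = x' + s' * r -> s *: e0 = s' *: e0.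
Proof.
move=> hx hx' e; apply/eqP; rewrite -subr_eq0 -scalerBl; apply/eqP/he0.
apply: colon_sub_max.
have -> : (s - s') * r = (x + s * r) - x - s' * r by ring.
rewrite e (_ : x' + s' * r - x - s' * r = x' - x); last by ring.
by apply: ha.2.1 => //; rewrite -mulN1r; apply: ha.2.2.
Qed.

Lemma adjoin_coef_ex (y : A) : exists s x, a x /\ sval y = x + s * r.
Proof. by case: y => y [x [s h]]; exists s, x. Qed.

(* The coefficient s is chosen arbitrarily; adjoin_coef_scale makes the choice
   irrelevant. *)
Definition coef_map (y : A) : E := sval (cid (adjoin_coef_ex y)) *: e0.

Lemma coef_mapE (y : A) x s : a x -> sval y = x + s * r -> coef_map y = s *: e0.
Proof.
move=> hx hy; have [x' [hx' hy']] := svalP (cid (adjoin_coef_ex y)).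
by apply: (adjoin_coef_scale hx' hx); rewrite -hy' hy.
Qed.

Lemma coef_map_linear : R_linear coef_map.
Proof.
move=> c u v.
have [su [x [hx hu]]] := adjoin_coef_ex u.
have [sv [x' [hx' hv]]] := adjoin_coef_ex v.
rewrite (coef_mapE hx hu) (coef_mapE hx' hv).
rewrite (coef_mapE (x := c * x + x') (s := c * su + sv)).
- by rewrite scalerA scalerDl.
- by apply: ha.2.1 => //; apply: ha.2.2.
- by rewrite /= hu hv; ring.
Qed.

Hypothesis hinj : injective_module E.

Lemma colon_witness : exists e : E, colonE a e /\ r *: e <> 0.
Proof.
have [h [hlin hh]] := hinj (@ideal_incl_linear _ _ _ _ _) (@ideal_incl_inj _ _ _ _ _)
  coef_map_linear.
have extend (y : A) : sval y *: h (1 : R^o) = coef_map y.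
  by rewrite -hh -(R_linearZ _ _ hlin); congr h; exact: mulr1.
exists (h 1); split.
- move=> x hx; have ax : adjoin x by exists x, 0; rewrite mul0r addr0.
  rewrite (extend (exist _ x ax)) (coef_mapE (x := x) (s := 0)) ?scale0r //=.
  by rewrite mul0r addr0.
- have ar : adjoin r by exists 0, 1; rewrite mul1r add0r; split=> //; exact: ha.1.
  rewrite (extend (exist _ r ar)) (coef_mapE (x := 0) (s := 1)) ?scale1r ?mul1r ?add0r //.
  + by rewrite -(scale1r e0) => /he0; exact: hloc.2.1.
  + exact: ha.1.
Qed.

End ColonWitness.

Lemma hull_colon_witness (R : comNzRingType) (m : R -> Prop) (E : lmodType R)
  (a : R -> Prop) (r : R) : local_with m -> injective_hull m E -> is_ideal a ->
  ~ a r -> exists e : E, colonE a e /\ r *: e <> 0.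
Proof.
by move=> hloc [hinj [e0 [he0 _]]] ha har; exact: (colon_witness hloc ha har he0 hinj).
Qed.

Section PhiModule.
Variables (R : comNzRingType) (T : nat -> lmodType R).

Lemma phi_eq (z w : phi_t T) : (forall n, z n = w n) -> z = w.
Proof. exact: functional_extensionality_dep. Qed.

Lemma phi_scale0 (r : R) : phi_scale r (phi0 T) = phi0 T.
Proof. by apply: phi_eq => n; rewrite /phi_scale scaler0. Qed.

Lemma phi_scaleD (r : R) (z w : phi_t T) :
  phi_scale r (phi_add z w) = phi_add (phi_scale r z) (phi_scale r w).
Proof. by apply: phi_eq => n; rewrite /phi_scale /phi_add scalerDr. Qed.

Lemma phi_scaleC (r c : R) (z : phi_t T) :
  phi_scale r (phi_scale c z) = phi_scale c (phi_scale r z).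
Proof. by apply: phi_eq => n; rewrite /phi_scale !scalerA mulrC. Qed.

Lemma phi_add0 : phi_add (phi0 T) (phi0 T) = phi0 T.
Proof. by apply: phi_eq => n; rewrite /phi_add addr0. Qed.

Lemma finsupp0 : finsupp (phi0 T).
Proof. by exists 0%N. Qed.

Lemma finsuppD (z w : phi_t T) : finsupp z -> finsupp w -> finsupp (phi_add z w).
Proof.
move=> [N1 h1] [N2 h2]; exists (maxn N1 N2) => n; rewrite geq_max => /andP[n1 n2].
by rewrite /phi_add h1 ?h2 ?addr0.
Qed.

Lemma finsuppZ (c : R) (z : phi_t T) : finsupp z -> finsupp (phi_scale c z).
Proof. by move=> [N h]; exists N => n hn; rewrite /phi_scale h // scaler0. Qed.

Variables (p : nat) (xmap : forall n, T n -> T n.+1).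
Hypotheses (xadd : forall n (t1 t2 : T n), xmap (t1 + t2) = xmap t1 + xmap t2)
  (xscale : forall n r (t : T n), xmap (r *: t) = (r ^+ p) *: xmap t).

Lemma xmap0 n : xmap (0 : T n) = 0.
Proof. by apply: (addrI (xmap (0 : T n))); rewrite -xadd !addr0. Qed.

Lemma finsupp_x z : finsupp z -> finsupp (phi_x xmap z).
Proof. by move=> [N h]; exists N.+1 => -[|n] hn //=; rewrite h // xmap0. Qed.

Lemma phi_x0 : phi_x xmap (phi0 T) = phi0 T.
Proof. by apply: phi_eq => -[|n] //=; rewrite /phi0 xmap0. Qed.

Lemma phi_xD z w : phi_x xmap (phi_add z w) = phi_add (phi_x xmap z) (phi_x xmap w).
Proof. by apply: phi_eq => -[|n] /=; rewrite /phi_add ?addr0 ?xadd. Qed.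

Lemma phi_xZ c z : phi_x xmap (phi_scale c z) = phi_scale (c ^+ p) (phi_x xmap z).
Proof. by apply: phi_eq => -[|n] /=; rewrite /phi_scale ?scaler0 ?xscale. Qed.

Lemma iter_phi_x0 n : iter n (phi_x xmap) (phi0 T) = phi0 T.
Proof. by elim: n => //= n ->; rewrite phi_x0. Qed.

Lemma iter_phi_xD n z w : iter n (phi_x xmap) (phi_add z w) =
  phi_add (iter n (phi_x xmap) z) (iter n (phi_x xmap) w).
Proof. by elim: n => //= n ->; rewrite phi_xD. Qed.

Lemma iter_phi_xZ n c z : exists c',
  iter n (phi_x xmap) (phi_scale c z) = phi_scale c' (iter n (phi_x xmap) z).
Proof.
elim: n => [|n [c' IH]] /=; first by exists c.
by exists (c' ^+ p); rewrite IH phi_xZ.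
Qed.

Lemma annPhi_submodule (a : R -> Prop) : RXf_submodule xmap (annPhi xmap a).
Proof.
split; first by move=> z [].
split; first by split=> [|r n _]; rewrite ?iter_phi_x0 ?phi_scale0 //; exact: finsupp0.
split.
  move=> z w [fz hz] [fw hw]; split=> [|r n ar]; first exact: finsuppD.
  by rewrite iter_phi_xD phi_scaleD hz // hw // phi_add0.
split.
  move=> c z [fz hz]; split=> [|r n ar]; first exact: finsuppZ.
  by have [c' ->] := iter_phi_xZ n c z; rewrite phi_scaleC hz // phi_scale0.
move=> z [fz hz]; split=> [|r n ar]; first exact: finsupp_x.
by rewrite -iterSr; exact: hz.
Qed.

End PhiModule.

Section DegreeZero.
Variables (R : comNzRingType) (p : nat) (M N : lmodType R) (tau : M -> N).
Hypothesis htau : frob_base_change p 0 tau.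

Lemma frob_base_change0_inj : injective tau.
Proof.
have id_semilinear : frob_semilinear p 0 (@id M).
  by split=> // r x; rewrite expn0 expr1.
have [[psi [_ hpsi]] _] := htau.2 M id id_semilinear.
by move=> x y e; rewrite -(hpsi x) -(hpsi y) e.
Qed.

Lemma frob_base_change0_linear : R_linear tau.
Proof. by move=> r x y; rewrite htau.1.1 htau.1.2 expn0 expr1. Qed.

End DegreeZero.

Lemma phi_deg0_scale_eq0 (R : comNzRingType) (p : nat) (E : lmodType R)
  (T : nat -> lmodType R) (tau0 : E -> T 0%N) (r : R) (e : E) :
  frob_base_change p 0 tau0 -> phi_scale r (phi_deg0 (tau0 e)) = phi0 T -> r *: e = 0.
Proof.
move=> htau /(congr1 (fun z => z 0%N)); rewrite /phi_scale /phi0 /=.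
rewrite -(R_linearZ _ _ (frob_base_change0_linear htau)).
rewrite -(R_linear0 (frob_base_change0_linear htau)).
exact: (frob_base_change0_inj htau).
Qed.

Lemma annPhi0_colon (R : comNzRingType) (p : nat) (E : lmodType R)
  (T : nat -> lmodType R) (tau : forall n, E -> T n)
  (xmap : forall n, T n -> T n.+1) (a : R -> Prop) (e : E) :
  frob_base_change p 0 (tau 0%N) -> annPhi0 tau xmap a e -> colonE a e.
Proof. by move=> htau [_ h] r ar; exact: phi_deg0_scale_eq0 htau (h r 0%N ar). Qed.

Theorem lemma1p1 (R : comNzRingType) (p : nat) (hp : p \in [pchar R])
  (m : R -> Prop) (hloc : local_with m) (hnoeth : noetherian R) (hF : Fpure R p)
  (E : lmodType R) (hE : injective_hull m E)
  (T : nat -> lmodType R) (tau : forall n, E -> T n)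
  (xmap : forall n, T n -> T n.+1) (hPhi : Phi_data p tau xmap)
  (a : R -> Prop) (ha : is_ideal a) :
  (forall e : E, colonE a e -> annPhi0 tau xmap a e) <->
  (PhiE_special xmap a /\ forall e : E, annPhi0 tau xmap a e <-> colonE a e).
Proof.
case: hPhi => hbc [xadd [xscale _]].
have ann0_colon e : annPhi0 tau xmap a e -> colonE a e := annPhi0_colon (hbc 0%N).
split=> [colon_ann0 | [_ hann] e /hann //].
split=> [|e]; last by split; [exact: ann0_colon | exact: colon_ann0].
exists (annPhi xmap a); split; first exact: annPhi_submodule xadd xscale a.
move=> r; split=> [ar z [_ hz] | hr]; first exact: (hz r 0%N ar).
apply: contrapT => nar.
have [e [ce nre]] := hull_colon_witness hloc hE ha nar.
by apply: nre; apply: phi_deg0_scale_eq0 (hbc 0%N) _; apply: hr; exact: colon_ann0.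
Qed.
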